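(* Let $N\ge1$, $n\ge1$, $\gamma>0$, and let channel gains $g_{S,k}>0$, $g_{k,D}>0$ ($k=1,\dots,N$) satisfy $g_{S,1}\le\cdots\le g_{S,N}$. With $C_{a,b}=\tfrac12\log(1+g_{a,b}\gamma)$ and $V_{a,b}=V(g_{a,b}\gamma)$, $V(\rho)=\frac{\rho}{2}\frac{2+\rho}{(1+\rho)^2}(\log e)^2$, define for $1\le i\le N$, $1\le j\le N$: $$a_{ij}=\sqrt{\tfrac{V_{S,i}}{V_{S,j}}},\quad b_{ij}=\sqrt{\tfrac{n}{V_{S,j}}}(C_{S,j}-C_{S,i}),\quad a_{i(N+1)}=\sqrt{\tfrac{V_{S,i}}{V_{i,D}}},\quad b_{i(N+1)}=\sqrt{\tfrac{n}{V_{i,D}}}(C_{i,D}-C_{S,i}),\quad c_i=\sqrt{V_{S,i}}.$$ Let $\varepsilon_d'\in(0,\tfrac12)$ and let $v_0$ be the optimal objective value of the problem $$\min \sum_{i=1}^N c_ix_i\quad\text{s.t.}\quad \sum_{i=1}^N\sum_{j=i}^{N+1}Q(a_{ij}x_i+b_{ij})-\varepsilon_d'=0,\quad x_i\ge0\ (i=1,\dots,N).$$ Let $x_1\in\mathbb{R}$ be the solution of $\sum_{i=1}^N\sum_{j=i}^{N+1}Q(a_{ij}x+b_{ij})-\varepsilon_d'=0$. Then $$v_1\le v_0\le v_2,\qquad v_1=Q^{-1}(\varepsilon_d')\sum_{i=1}^N c_i,\quad v_2=x_1\sum_{i=1}^N c_i.$$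
   Context: $Q(x)=\int_x^\infty\frac{1}{\sqrt{2\pi}}e^{-t^2/2}\,dt$ is the Gaussian tail function and $Q^{-1}$ its inverse. $S$ denotes the source, $D$ the destination, $1,\dots,N$ the relays, $g_{a,b}$ the channel gain of link $a\to b$, $\gamma$ the transmit SNR and $n$ the blocklength; $C_{a,b}$ and $V_{a,b}$ are the capacity and channel dispersion of the corresponding real AWGN link. *)

From Stdlib Require Import Reals List ClassicalEpsilon.
From Coquelicot Require Import Coquelicot.
Open Scope R_scope.

Definition Qf (x : R) : R :=
  RInt_gen (fun t => / sqrt (2 * PI) * exp (- (t ^ 2) / 2))
           (at_point x) (Rbar_locally p_infty).

Definition Qinv (e : R) : R := epsilon (inhabits 0) (fun y => Qf y = e).

Definition log2 (x : R) : R := ln x / ln 2.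

Definition Ccap (rho : R) : R := / 2 * log2 (1 + rho).
Definition Vdisp (rho : R) : R :=
  rho / 2 * ((2 + rho) / (1 + rho) ^ 2) * (log2 (exp 1)) ^ 2.

(* finite sum of f k for k = m, m+1, ..., m+len-1 *)
Definition sumR (m len : nat) (f : nat -> R) : R :=
  fold_right Rplus 0 (map f (seq m len)).

Section Coeffs.
Variables (N n : nat) (gamma : R) (gS gD : nat -> R).

Definition CSD_S (k : nat) := Ccap (gS k * gamma).
Definition VSD_S (k : nat) := Vdisp (gS k * gamma).
Definition CSD_D (k : nat) := Ccap (gD k * gamma).
Definition VSD_D (k : nat) := Vdisp (gD k * gamma).

(* a_{ij}, b_{ij} for 1 <= i <= N, i <= j <= N+1 *)
Definition acoef (i j : nat) : R :=
  if (j <=? N)%nat then sqrt (VSD_S i / VSD_S j)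
  else sqrt (VSD_S i / VSD_D i).
Definition bcoef (i j : nat) : R :=
  if (j <=? N)%nat then sqrt (INR n / VSD_S j) * (CSD_S j - CSD_S i)
  else sqrt (INR n / VSD_D i) * (CSD_D i - CSD_S i).
Definition ccoef (i : nat) : R := sqrt (VSD_S i).

Definition constr (eps : R) (x : nat -> R) : R :=
  sumR 1 N (fun i => sumR i (N + 2 - i) (fun j => Qf (acoef i j * x i + bcoef i j)))
  - eps.

Definition objective (x : nat -> R) : R := sumR 1 N (fun i => ccoef i * x i).

Definition feasible (eps : R) (x : nat -> R) : Prop :=
  constr eps x = 0 /\ (forall i, (1 <= i <= N)%nat -> 0 <= x i).

Definition v0 (eps : R) : Rbar :=
  Glb_Rbar (fun v => exists x, feasible eps x /\ v = objective x).

End Coeffs.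

From Stdlib Require Import Reals List Lra Lia FunctionalExtensionality ClassicalEpsilon.
From Coquelicot Require Import Coquelicot.
Open Scope R_scope.

(* Every term of the constraint is nonnegative and the diagonal term j = i equals Q(x_i),
   because a_ii = 1 and b_ii = 0.  Hence a feasible x has Q(x_i) <= eps = Q(Q^-1(eps)), i.e.
   x_i >= Q^-1(eps) as Q is strictly decreasing, and multiplying by c_i >= 0 and summing gives
   v1 <= v0.  The constant vector x1 is feasible (x1 >= 0 since Q(x1) <= eps < 1/2 = Q(0)),
   which gives v0 <= v2.
   The facts needed about Q (continuity, strict decrease, Q(0) = 1/2 and Q -> 0 at +oo, so
   that Q^-1(eps) exists) reduce to the Gaussian integral, computed by Feynman's trick:
   G(u)^2 + 2 K(u) is constant, with G(u) = int_0^u e^(-t^2/2) dt and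
   K(u) = int_0^1 e^(-u^2 (1 + t^2)/2) / (1 + t^2) dt, equal to pi/2 at u = 0, while K -> 0. *)

Definition gauss (t : R) : R := exp (- (t ^ 2) / 2).
Definition gauss_int (u : R) : R := RInt gauss 0 u.

Definition feynman (u t : R) : R := exp (- (u ^ 2 * (1 + t ^ 2)) / 2) / (1 + t ^ 2).
Definition feynman_du (u t : R) : R := - u * exp (- (u ^ 2 * (1 + t ^ 2)) / 2).
Definition feynman_int (u : R) : R := RInt (feynman u) 0 1.

Lemma continuous_gauss t : continuous gauss t.
Proof. apply (ex_derive_continuous (V := R_NormedModule)); unfold gauss; auto_derive; easy. Qed.

Lemma ex_RInt_gauss a b : ex_RInt gauss a b.
Proof. apply (ex_RInt_continuous (V := R_CompleteNormedModule)); intros; apply continuous_gauss. Qed.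

Lemma is_derive_gauss_int u : is_derive gauss_int u (gauss u).
Proof.
  apply (is_derive_RInt (V := R_NormedModule) gauss gauss_int 0 u).
  - apply filter_forall; intros b; apply (RInt_correct (V := R_CompleteNormedModule)), ex_RInt_gauss.
  - apply continuous_gauss.
Qed.

Lemma gauss_int_ge0 u : 0 <= u -> 0 <= gauss_int u.
Proof. intros Hu; apply RInt_ge_0; [exact Hu | apply ex_RInt_gauss | intros; apply Rlt_le, exp_pos]. Qed.

Lemma continuous_feynman u t : continuous (feynman u) t.
Proof. apply (ex_derive_continuous (V := R_NormedModule)); unfold feynman; auto_derive; nra. Qed.

Lemma ex_RInt_feynman u a b : ex_RInt (feynman u) a b.
Proof. apply (ex_RInt_continuous (V := R_CompleteNormedModule)); intros; apply continuous_feynman. Qed.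

Lemma is_derive_feynman u t : is_derive (fun z => feynman z t) u (feynman_du u t).
Proof.
  unfold feynman, feynman_du; auto_derive; [nra |].
  replace (- (u * (u * 1) * (1 + t * (t * 1))) * / 2) with (- (u ^ 2 * (1 + t ^ 2)) / 2)
    by (simpl; field).
  field; nra.
Qed.

Lemma continuity_2d_feynman_du u t :
  continuity_2d_pt (fun u t => Derive (fun z => feynman z t) u) u t.
Proof.
  apply continuity_2d_pt_ext with (f := feynman_du).
  { intros x y; symmetry; apply is_derive_unique, is_derive_feynman. }
  unfold feynman_du, Rdiv; simpl.
  apply continuity_2d_pt_mult.
  { apply continuity_2d_pt_opp, continuity_2d_pt_id1. }
  apply continuity_1d_2d_pt_comp; [apply derivable_continuous_pt, derivable_pt_exp |].
  repeat first [ apply continuity_2d_pt_mult | apply continuity_2d_pt_plus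
               | apply continuity_2d_pt_opp | apply continuity_2d_pt_id1
               | apply continuity_2d_pt_id2 | apply continuity_2d_pt_const ].
Qed.

(* Substitute [s = u t]. *)
Lemma RInt_feynman_du u : RInt (feynman_du u) 0 1 = - gauss u * gauss_int u.
Proof.
  rewrite (RInt_ext (feynman_du u) (fun t => scal (- gauss u) (scal u (gauss (u * t + 0))))).
  2:{ intros t _; unfold feynman_du, gauss, scal; simpl; unfold mult; simpl.
      replace (- (u * (u * 1) * (1 + t * (t * 1))) / 2)
        with (- (u * (u * 1)) / 2 + - ((u * t + 0) * ((u * t + 0) * 1)) / 2) by field.
      rewrite exp_plus; ring. }
  rewrite (RInt_scal (V := R_CompleteNormedModule)).
  2:{ apply (ex_RInt_continuous (V := R_CompleteNormedModule)); intros z _.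
      apply (ex_derive_continuous (V := R_NormedModule)).
      unfold gauss, scal; simpl; unfold mult; simpl; auto_derive; easy. }
  rewrite (RInt_comp_lin (V := R_CompleteNormedModule)) by apply ex_RInt_gauss.
  unfold gauss_int, scal; simpl; unfold mult; simpl.
  now replace (u * 0 + 0) with 0 by ring; replace (u * 1 + 0) with u by ring.
Qed.

Lemma is_derive_feynman_int u : is_derive feynman_int u (- gauss u * gauss_int u).
Proof.
  rewrite <- RInt_feynman_du.
  rewrite (RInt_ext (feynman_du u) (fun t => Derive (fun z => feynman z t) u)).
  2:{ intros t _; symmetry; apply is_derive_unique, is_derive_feynman. }
  apply is_derive_RInt_param.
  - apply filter_forall; intros x t _; eexists; apply is_derive_feynman.
  - intros t _; apply continuity_2d_feynman_du.
  - apply filter_forall; intros y; apply ex_RInt_feynman.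
Qed.

Lemma feynman_int0 : feynman_int 0 = PI / 4.
Proof.
  unfold feynman_int.
  rewrite (RInt_ext _ (fun t => / (1 + t ^ 2))).
  2:{ intros t _; unfold feynman.
      replace (- (0 ^ 2 * (1 + t ^ 2)) / 2) with 0 by field.
      rewrite exp_0; apply Rmult_1_l. }
  rewrite <- atan_1; apply is_RInt_unique.
  replace (atan 1) with (minus (atan 1) (atan 0))
    by (rewrite atan_0; unfold minus, plus, opp; simpl; ring).
  apply (is_RInt_derive (V := R_CompleteNormedModule)).
  - intros x _; replace (/ (1 + x ^ 2)) with (/ (1 + x²)) by (unfold Rsqr; simpl; f_equal; ring).
    apply is_derive_atan.
  - intros x _; apply (ex_derive_continuous (V := R_NormedModule)); auto_derive; nra.
Qed.

Lemma gauss_feynman_const u : gauss_int u ^ 2 + 2 * feynman_int u = PI / 2.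
Proof.
  set (h := fun u => gauss_int u ^ 2 + 2 * feynman_int u).
  assert (Hderive : forall v, is_derive h v 0).
  { intros v; unfold h.
    assert (HG := is_derive_gauss_int v).
    assert (HK := is_derive_feynman_int v).
    auto_derive.
    - repeat split; eexists; eassumption.
    - change (fun x => gauss_int x) with gauss_int; change (fun x => feynman_int x) with feynman_int.
      rewrite (is_derive_unique _ _ _ HG), (is_derive_unique _ _ _ HK); ring. }
  assert (H0 : h 0 = PI / 2).
  { unfold h, gauss_int; rewrite RInt_point, feynman_int0; unfold zero; simpl; field. }
  change (h u = PI / 2); rewrite <- H0.
  destruct (Rtotal_order u 0) as [Hu | [-> | Hu]]; [| reflexivity |].
  - apply (eq_is_derive (V := R_NormedModule)); [intros; apply Hderive | exact Hu].
  - symmetry; apply (eq_is_derive (V := R_NormedModule)); [intros; apply Hderive | exact Hu].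
Qed.

Lemma feynman_int_bounds u : 0 <= feynman_int u <= gauss u.
Proof.
  split.
  - apply RInt_ge_0; [lra | apply ex_RInt_feynman |].
    intros t _; apply Rlt_le, Rdiv_lt_0_compat; [apply exp_pos | nra].
  - unfold feynman_int.
    replace (gauss u) with (RInt (fun _ => gauss u) 0 1)
      by (rewrite RInt_const; unfold scal; simpl; unfold mult; simpl; ring).
    apply RInt_le; [lra | apply ex_RInt_feynman | apply (ex_RInt_const (V := R_CompleteNormedModule)) |].
    intros t _; unfold feynman, gauss.
    assert (Hexp : exp (- (u ^ 2 * (1 + t ^ 2)) / 2) <= exp (- (u ^ 2) / 2)).
    { assert (Hle : - (u ^ 2 * (1 + t ^ 2)) / 2 <= - (u ^ 2) / 2) by nra.
      destruct Hle as [Hlt | Heq]; [apply Rlt_le, exp_increasing, Hlt | rewrite Heq; lra]. }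
    assert (Hpos := exp_pos (- (u ^ 2 * (1 + t ^ 2)) / 2)).
    assert (Hinv : / (1 + t ^ 2) <= 1) by (rewrite <- Rinv_1; apply Rinv_le_contravar; nra).
    unfold Rdiv; nra.
Qed.

Lemma lim_gauss : filterlim gauss (Rbar_locally p_infty) (locally 0).
Proof.
  apply (is_lim_comp exp (fun u => - (u ^ 2) / 2) p_infty 0 m_infty).
  - apply is_lim_exp_m.
  - intros P [M HM]; exists (Rabs M + 1); intros x Hx; apply HM.
    assert (Rabs M >= - M) by (unfold Rabs; destruct Rcase_abs; lra).
    assert (0 <= Rabs M) by apply Rabs_pos.
    nra.
  - exists 0; intros; discriminate.
Qed.

Lemma lim_feynman_int : filterlim feynman_int (Rbar_locally p_infty) (locally 0).
Proof.
  apply (filterlim_le_le (fun _ => 0) feynman_int gauss (Finite 0)).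
  - apply filter_forall, feynman_int_bounds.
  - apply filterlim_const.
  - apply lim_gauss.
Qed.

Lemma lim_gauss_int : filterlim gauss_int (Rbar_locally p_infty) (locally (sqrt (PI / 2))).
Proof.
  apply (filterlim_ext_loc (fun u => sqrt (PI / 2 - 2 * feynman_int u))).
  { exists 0; intros u Hu.
    rewrite <- (gauss_feynman_const u).
    replace (gauss_int u ^ 2 + 2 * feynman_int u - 2 * feynman_int u) with (gauss_int u ^ 2) by ring.
    apply sqrt_pow2, gauss_int_ge0; lra. }
  apply (filterlim_comp _ _ _ feynman_int (fun z => sqrt (PI / 2 - 2 * z)) _ (locally 0)).
  { apply lim_feynman_int. }
  replace (sqrt (PI / 2)) with (sqrt (PI / 2 - 2 * 0)) by (f_equal; ring).
  apply (proj1 (continuity_pt_filterlim (fun z => sqrt (PI / 2 - 2 * z)) 0)).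
  apply (continuity_pt_comp (fun z => PI / 2 - 2 * z) sqrt).
  - apply derivable_continuous_pt; reg.
  - apply continuity_pt_sqrt; generalize PI_RGT_0; lra.
Qed.

Definition normal_pdf (t : R) : R := / sqrt (2 * PI) * gauss t.

Lemma normal_pdf_gt0 t : 0 < normal_pdf t.
Proof.
  apply Rmult_lt_0_compat; [| apply exp_pos].
  apply Rinv_0_lt_compat, sqrt_lt_R0; generalize PI_RGT_0; lra.
Qed.

Lemma continuous_normal_pdf t : continuous normal_pdf t.
Proof. apply (ex_derive_continuous (V := R_NormedModule)); unfold normal_pdf, gauss; auto_derive; easy. Qed.

Lemma ex_RInt_normal_pdf a b : ex_RInt normal_pdf a b.
Proof. apply (ex_RInt_continuous (V := R_CompleteNormedModule)); intros; apply continuous_normal_pdf. Qed.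

Lemma is_derive_RInt_normal_pdf x : is_derive (fun y => RInt normal_pdf 0 y) x (normal_pdf x).
Proof.
  apply (is_derive_RInt (V := R_NormedModule) normal_pdf _ 0 x).
  - apply filter_forall; intros b; apply (RInt_correct (V := R_CompleteNormedModule)), ex_RInt_normal_pdf.
  - apply continuous_normal_pdf.
Qed.

Lemma lim_RInt_normal_pdf :
  filterlim (fun y => RInt normal_pdf 0 y) (Rbar_locally p_infty) (locally (1 / 2)).
Proof.
  apply (filterlim_ext (fun y => / sqrt (2 * PI) * gauss_int y)).
  { intros y; symmetry; apply (RInt_scal (V := R_CompleteNormedModule)), ex_RInt_gauss. }
  replace (1 / 2) with (/ sqrt (2 * PI) * sqrt (PI / 2)).
  2:{ assert (HPI := PI_RGT_0).
      replace (2 * PI) with (2 ^ 2 * (PI / 2)) by field.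
      rewrite sqrt_mult, sqrt_pow2 by nra.
      field; apply Rgt_not_eq, sqrt_lt_R0; lra. }
  apply (filterlim_comp _ _ _ gauss_int (fun z => / sqrt (2 * PI) * z) _ (locally (sqrt (PI / 2)))).
  { apply lim_gauss_int. }
  apply (proj1 (continuity_pt_filterlim (fun z => / sqrt (2 * PI) * z) _)).
  apply derivable_continuous_pt; reg.
Qed.

Lemma Qf_eq x : Qf x = 1 / 2 - RInt normal_pdf 0 x.
Proof.
  unfold Qf; apply is_RInt_gen_unique.
  set (F := fun y => RInt normal_pdf 0 y).
  assert (HF : Derive F = normal_pdf).
  { apply functional_extensionality; intros t; apply is_derive_unique, is_derive_RInt_normal_pdf. }
  change (fun t => / sqrt (2 * PI) * exp (- t ^ 2 / 2)) with normal_pdf.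
  rewrite <- HF; change (1 / 2 - RInt normal_pdf 0 x) with (1 / 2 - F x).
  apply is_RInt_gen_Derive.
  - apply filter_forall; intros ab t _; eexists; apply is_derive_RInt_normal_pdf.
  - apply filter_forall; intros ab t _; rewrite HF; apply continuous_normal_pdf.
  - intros P HP; apply (locally_singleton _ _ HP).
  - apply lim_RInt_normal_pdf.
Qed.

Lemma Qf0 : Qf 0 = 1 / 2.
Proof. rewrite Qf_eq, RInt_point; unfold zero; simpl; ring. Qed.

Lemma continuity_Qf : continuity Qf.
Proof.
  intros x; apply continuity_pt_filterlim.
  apply (filterlim_ext (fun y => 1 / 2 - RInt normal_pdf 0 y)); [intros; symmetry; apply Qf_eq |].
  rewrite Qf_eq.
  apply (ex_derive_continuous (V := R_NormedModule) (fun y => 1 / 2 - RInt normal_pdf 0 y)).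
  eexists; apply (is_derive_minus (fun _ => 1 / 2) (fun y => RInt normal_pdf 0 y)).
  - apply (is_derive_const (K := R_AbsRing)).
  - apply is_derive_RInt_normal_pdf.
Qed.

Lemma Qf_decreasing x y : x < y -> Qf y < Qf x.
Proof.
  intros Hxy; rewrite !Qf_eq.
  rewrite <- (RInt_Chasles (V := R_CompleteNormedModule) normal_pdf 0 x y) by apply ex_RInt_normal_pdf.
  assert (0 < RInt normal_pdf x y).
  { apply RInt_gt_0; [exact Hxy | intros; apply normal_pdf_gt0 | intros; apply continuous_normal_pdf]. }
  unfold plus; simpl; lra.
Qed.

Lemma Qf_le_rev x y : Qf x <= Qf y -> y <= x.
Proof. intros Hle; destruct (Rle_or_lt y x) as [| Hlt]; [assumption | apply Qf_decreasing in Hlt; lra]. Qed.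

Lemma lim_Qf : filterlim Qf (Rbar_locally p_infty) (locally 0).
Proof.
  apply (filterlim_ext (fun y => 1 / 2 - RInt normal_pdf 0 y)); [intros; symmetry; apply Qf_eq |].
  replace (locally 0) with (locally (1 / 2 - 1 / 2)) by (f_equal; ring).
  apply (filterlim_comp _ _ _ (fun y => RInt normal_pdf 0 y) (fun z => 1 / 2 - z) _ (locally (1 / 2))).
  { apply lim_RInt_normal_pdf. }
  apply (proj1 (continuity_pt_filterlim (fun z => 1 / 2 - z) _)).
  apply derivable_continuous_pt; reg.
Qed.

Lemma Qf_ge0 x : 0 <= Qf x.
Proof.
  apply (filterlim_le (F := Rbar_locally p_infty) Qf (fun _ => Qf x) 0 (Qf x)).
  - exists x; intros y Hy; apply Rlt_le, Qf_decreasing, Hy.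
  - apply lim_Qf.
  - apply filterlim_const.
Qed.

Lemma Qf_surj e : 0 < e <= 1 / 2 -> exists y, Qf y = e.
Proof.
  intros He.
  destruct (lim_Qf (ball 0 e) (locally_ball 0 (mkposreal e (proj1 He)))) as [M HM].
  set (y := Rmax M 0 + 1).
  assert (HQy : Qf y < e).
  { assert (Hy := HM y ltac:(unfold y; generalize (Rmax_l M 0); lra)).
    apply Rabs_def2 in Hy; unfold minus, plus, opp in Hy; simpl in Hy; lra. }
  assert (Hy0 : 0 < y) by (unfold y; generalize (Rmax_r M 0); lra).
  destruct (IVT_gen Qf 0 y e continuity_Qf) as [z [_ Hz]].
  { rewrite Qf0, Rmin_right, Rmax_left by (rewrite <- Qf0; left; apply Qf_decreasing, Hy0); lra. }
  exists z; exact Hz.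
Qed.

Lemma Qf_Qinv e : 0 < e <= 1 / 2 -> Qf (Qinv e) = e.
Proof. intros He; apply (epsilon_spec (inhabits 0) (fun y => Qf y = e)), Qf_surj, He. Qed.

Lemma sumR_0 m F : sumR m 0 F = 0.
Proof. reflexivity. Qed.

Lemma sumR_S m len F : sumR m (S len) F = F m + sumR (S m) len F.
Proof. reflexivity. Qed.

Lemma sumR_ge0 m len F : (forall k, (m <= k < m + len)%nat -> 0 <= F k) -> 0 <= sumR m len F.
Proof.
  revert m; induction len as [| len IH]; intros m HF; rewrite ?sumR_0, ?sumR_S; [lra |].
  apply Rplus_le_le_0_compat; [apply HF; lia | apply IH; intros; apply HF; lia].
Qed.

Lemma sumR_ge_term m len F k :
  (forall k, (m <= k < m + len)%nat -> 0 <= F k) ->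
  (m <= k < m + len)%nat -> F k <= sumR m len F.
Proof.
  revert m; induction len as [| len IH]; intros m HF Hk; [lia |]; rewrite sumR_S.
  destruct (Nat.eq_dec k m) as [-> | Hne].
  - assert (0 <= sumR (S m) len F) by (apply sumR_ge0; intros; apply HF; lia); lra.
  - assert (F k <= sumR (S m) len F) by (apply IH; [intros; apply HF; lia | lia]).
    assert (0 <= F m) by (apply HF; lia); lra.
Qed.

Lemma sumR_le m len F G :
  (forall k, (m <= k < m + len)%nat -> F k <= G k) -> sumR m len F <= sumR m len G.
Proof.
  revert m; induction len as [| len IH]; intros m HFG; rewrite ?sumR_0, ?sumR_S; [lra |].
  apply Rplus_le_compat; [apply HFG; lia | apply IH; intros; apply HFG; lia].
Qed.

Lemma sumR_mulr m len F a : sumR m len (fun k => F k * a) = sumR m len F * a.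
Proof.
  revert m; induction len as [| len IH]; intros m; rewrite ?sumR_0, ?sumR_S; [ring |].
  rewrite IH; ring.
Qed.

Lemma Vdisp_gt0 rho : 0 < rho -> 0 < Vdisp rho.
Proof.
  intros Hrho; unfold Vdisp.
  assert (Hln2 : 0 < ln 2) by (rewrite <- ln_1; apply ln_increasing; lra).
  assert (Hlog : 0 < log2 (exp 1)) by (unfold log2; rewrite ln_exp; apply Rdiv_lt_0_compat; lra).
  assert (0 < (2 + rho) / (1 + rho) ^ 2) by (apply Rdiv_lt_0_compat; [lra | apply pow_lt; lra]).
  assert (0 < log2 (exp 1) ^ 2) by (apply pow_lt, Hlog).
  assert (0 < rho / 2) by lra.
  apply Rmult_lt_0_compat; [apply Rmult_lt_0_compat |]; assumption.
Qed.

Section Channel.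

Variables (N n : nat) (gamma : R) (gS gD : nat -> R).
Hypothesis gamma_gt0 : 0 < gamma.
Hypothesis gS_gt0 : forall k, (1 <= k <= N)%nat -> 0 < gS k.

Lemma acoef_diag i : (1 <= i <= N)%nat -> acoef N gamma gS gD i i = 1.
Proof.
  intros Hi; unfold acoef.
  replace (i <=? N)%nat with true by (symmetry; apply Nat.leb_le; lia).
  assert (0 < VSD_S gamma gS i).
  { apply Vdisp_gt0, Rmult_lt_0_compat; [apply gS_gt0; lia | exact gamma_gt0]. }
  unfold Rdiv; rewrite Rinv_r by lra; apply sqrt_1.
Qed.

Lemma bcoef_diag i : (i <= N)%nat -> bcoef N n gamma gS gD i i = 0.
Proof.
  intros Hi; unfold bcoef.
  replace (i <=? N)%nat with true by (symmetry; apply Nat.leb_le; lia).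
  ring.
Qed.

Lemma Qf_le_constr eps x i :
  (1 <= i <= N)%nat -> Qf (x i) <= constr N n gamma gS gD eps x + eps.
Proof.
  intros Hi; unfold constr; unfold Rminus; rewrite Rplus_assoc, Rplus_opp_l, Rplus_0_r.
  eapply Rle_trans; [| apply (sumR_ge_term 1 N _ i); [intros; apply sumR_ge0; intros; apply Qf_ge0 | lia]].
  eapply Rle_trans; [| apply (sumR_ge_term i (N + 2 - i) _ i); [intros; apply Qf_ge0 | lia]].
  cbv beta; rewrite acoef_diag, bcoef_diag by lia.
  right; f_equal; ring.
Qed.

Lemma feasible_Qinv_le eps x i :
  0 < eps <= 1 / 2 -> feasible N n gamma gS gD eps x -> (1 <= i <= N)%nat -> Qinv eps <= x i.
Proof.
  intros Heps [Hc _] Hi; apply Qf_le_rev; rewrite Qf_Qinv by exact Heps.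
  generalize (Qf_le_constr eps x i Hi); lra.
Qed.

Lemma objective_const q : objective N gamma gS (fun _ => q) = q * sumR 1 N (ccoef gamma gS).
Proof. unfold objective; rewrite sumR_mulr; ring. Qed.

Lemma objective_ge_Qinv eps x :
  0 < eps <= 1 / 2 -> feasible N n gamma gS gD eps x ->
  Qinv eps * sumR 1 N (ccoef gamma gS) <= objective N gamma gS x.
Proof.
  intros Heps Hx; rewrite <- objective_const.
  apply sumR_le; intros k Hk.
  apply Rmult_le_compat_l; [apply sqrt_pos | apply (feasible_Qinv_le eps); [exact Heps | exact Hx | lia]].
Qed.

End Channel.

Theorem lemma4 (N n : nat) (gamma : R) (gS gD : nat -> R) (eps x1 : R) :
  (1 <= N)%nat -> (1 <= n)%nat -> 0 < gamma ->
  (forall k, (1 <= k <= N)%nat -> 0 < gS k) ->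
  (forall k, (1 <= k <= N)%nat -> 0 < gD k) ->
  (forall k, (1 <= k < N)%nat -> gS k <= gS (S k)) ->
  0 < eps < / 2 ->
  constr N n gamma gS gD eps (fun _ => x1) = 0 ->
  Rbar_le (Finite (Qinv eps * sumR 1 N (ccoef gamma gS)))
          (v0 N n gamma gS gD eps) /\
  Rbar_le (v0 N n gamma gS gD eps)
          (Finite (x1 * sumR 1 N (ccoef gamma gS))).
Proof.
  intros HN _ Hgamma HgS _ _ Heps Hc.
  assert (Heps_half : 0 < eps <= 1 / 2) by lra.
  assert (Hx1 : 0 <= x1).
  { apply Qf_le_rev; rewrite Qf0.
    generalize (Qf_le_constr N n gamma gS gD Hgamma HgS eps (fun _ => x1) 1 ltac:(lia)); lra. }
  unfold v0; destruct (Glb_Rbar_correct (fun v => exists x,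
    feasible N n gamma gS gD eps x /\ v = objective N gamma gS x)) as [Hlb Hglb].
  split.
  - apply Hglb; intros v [x [Hx ->]]; apply (objective_ge_Qinv N n gamma gS gD); assumption.
  - apply Hlb; exists (fun _ => x1); split.
    + split; [exact Hc | intros; exact Hx1].
    + symmetry; apply objective_const.
Qed.
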